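(* Let $X$ be one of $\mathbb{R}^n$, $\mathbb{S}^n$, or $\mathbb{H}^n$ with its standard metric. Then $X$ is Brillouin, i.e.: (1) $X$ is metrically consistent; (2) for all distinct $a,b\in X$ the mediatrix $L_{ab}$ is minimally separating; (3) for any three distinct points $0,a,b\in X$, the mediatrices $L_{0a}$ and $L_{0b}$ are topologically transversal.
   Context: For a metric space $(X,d)$: $N_r(x)=\{y: d(x,y)<r\}$, $C_r(x)=\{y: d(x,y)=r\}$. For $a\ne b$, the mediatrix is $L_{ab}=\{x: d(x,a)=d(x,b)\}$, with $L_{ab}^-=\{x: d(a,x)-d(b,x)<0\}$ and $L_{ab}^+=\{x: d(a,x)-d(b,x)>0\}$. $X$ is metrically consistent if for all $x\in X$, all $R>r>0$ and each $a\in C_R(x)$ there is $z\in C_r(x)$ with $N_{d(z,a)}(z)\subseteq N_R(x)$ and $C_{d(z,a)}(z)\cap C_R(x)=\{a\}$. A set $L\subseteq X$ separating $X$ is minimally separating if for every proper subset $\tilde L\subsetneq L$, $X\setminus \tilde L$ is connected. Two minimally separating mediatrices $L_{0a},L_{0b}$ are topologically transversal if they are disjoint, or if for every $x\in L_{0a}\cap L_{0b}$ and every neighborhood $V$ of $x$ the four sets $L_{0a}^{\pm}\cap L_{0b}^{\pm}\cap V$ (all sign combinations) are nonempty. *)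

From HB Require Import structures.
From mathcomp Require Import all_boot all_order all_algebra.
From mathcomp Require Import all_classical all_reals.
From mathcomp Require Import exp trigo.
Set Implicit Arguments. Unset Strict Implicit. Unset Printing Implicit Defensive.
Import Order.TTheory GRing.Theory Num.Theory.
Local Open Scope classical_set_scope.
Local Open Scope ring_scope.

Section MetricNotions.
Variables (R : realType) (X : Type) (d : X -> X -> R).

Definition mball (x : X) (r : R) : set X := [set y | d x y < r].
Definition msphere (x : X) (r : R) : set X := [set y | d x y = r].

Definition mediatrix (a b : X) : set X := [set x | d x a = d x b].
Definition mediatrix_minus (a b : X) : set X := [set x | d a x - d b x < 0].
Definition mediatrix_plus (a b : X) : set X := [set x | d a x - d b x > 0].

Definition mopen (U : set X) : Prop :=
  forall x, U x -> exists e : R, 0 < e /\ mball x e `<=` U.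
Definition mnbhd (x : X) (V : set X) : Prop :=
  exists U, mopen U /\ U x /\ U `<=` V.

Definition mconnected (S : set X) : Prop :=
  ~ (exists U V : set X, mopen U /\ mopen V /\ S `<=` U `|` V /\
       S `&` U !=set0 /\ S `&` V !=set0 /\ S `&` U `&` V = set0).

Definition separates (L : set X) : Prop := ~ mconnected (~` L).

Definition minimally_separating (L : set X) : Prop :=
  separates L /\
  forall L' : set X, L' `<=` L -> L' <> L -> mconnected (~` L').

Definition metrically_consistent : Prop :=
  forall (x : X) (Rr r : R), 0 < r -> r < Rr ->
  forall a, msphere x Rr a ->
  exists z, msphere x r z /\
    mball z (d z a) `<=` mball x Rr /\
    msphere z (d z a) `&` msphere x Rr = [set a].

Definition topologically_transversal (o a b : X) : Prop :=
  let La := mediatrix o a in let Lb := mediatrix o b in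
  La `&` Lb = set0 \/
  forall x, La x -> Lb x -> forall V, mnbhd x V ->
    mediatrix_minus o a `&` mediatrix_minus o b `&` V !=set0 /\
    mediatrix_minus o a `&` mediatrix_plus o b `&` V !=set0 /\
    mediatrix_plus o a `&` mediatrix_minus o b `&` V !=set0 /\
    mediatrix_plus o a `&` mediatrix_plus o b `&` V !=set0.

Definition Brillouin : Prop :=
  metrically_consistent /\
  (forall a b : X, a <> b -> minimally_separating (mediatrix a b)) /\
  (forall o a b : X, o <> a -> o <> b -> a <> b ->
     topologically_transversal o a b).

End MetricNotions.

Section ModelSpaces.
Variable R : realType.

Definition euclid_dist (n : nat) (x y : 'rV[R]_n) : R :=
  Num.sqrt (\sum_(i < n) (x ord0 i - y ord0 i) ^+ 2).

Definition sphere_pt (n : nat) :=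
  {x : 'rV[R]_n.+1 | \sum_(i < n.+1) x ord0 i ^+ 2 = 1}.
Definition sphere_dist (n : nat) (x y : sphere_pt n) : R :=
  acos (\sum_(i < n.+1) (proj1_sig x) ord0 i * (proj1_sig y) ord0 i).

(* hyperbolic space H^n: hyperboloid model in Minkowski space R^(1,n) *)
Definition lorentz (n : nat) (x y : 'rV[R]_n.+1) : R :=
  - (x ord0 ord0 * y ord0 ord0) +
  \sum_(i < n.+1 | i != ord0) x ord0 i * y ord0 i.
Definition arcosh (t : R) : R := ln (t + Num.sqrt (t ^+ 2 - 1)).
Definition hyp_pt (n : nat) :=
  {x : 'rV[R]_n.+1 | lorentz x x = -1 /\ 0 < x ord0 ord0}.
Definition hyp_dist (n : nat) (x y : hyp_pt n) : R :=
  arcosh (- lorentz (proj1_sig x) (proj1_sig y)).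

End ModelSpaces.

(* Each model space lives in a real vector space with a diagonal quadratic form B
   (Euclidean for R^n and S^n, Lorentzian for H^n), in which the half-space
   d(a,y) < d(b,y) is cut out by an affine function of y, and the geodesics from
   x are x + t h, cos t x + sin t h and cosh t x + sinh t h.  Moving from x along
   such a geodesic changes that function by a positive multiple of B(a - b, h).
   At a point x of L_oa and L_ob, the vectors o - a and o - b are tangent at x and
   have a nonzero Gram determinant, because three distinct points equidistant from
   x cannot be collinear on a quadric.  So some tangent direction has any
   prescribed signs against both, which gives transversality; taking h = a - b
   shows that every point of L_ab lies in the closure of both sides.  The sides
   are star-shaped along geodesics ending at a, hence connected, so removing a
   proper part of L_ab cannot disconnect X: a point of L_ab left behind is
   adherent to both sides.  For metric consistency take z on the geodesic from x
   to a with d(x,z) = r; for a point y at distance R from x and R - r from z,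
   the equality case of the (reverse) Cauchy-Schwarz inequality forces y = a. *)

From mathcomp Require Import all_boot all_order all_algebra.
From mathcomp Require Import all_classical all_reals exp trigo.
From mathcomp Require Import topology normedtype sequences.
From mathcomp Require Import ring lra.
Set Implicit Arguments. Unset Strict Implicit. Unset Printing Implicit Defensive.
Import Order.TTheory GRing.Theory Num.Theory.
Import numFieldNormedType.Exports.
Local Open Scope classical_set_scope.
Local Open Scope ring_scope.

Section MetricTopology.
Variables (R : realType) (X : Type) (d : X -> X -> R).

Definition path_continuous (g : R -> X) := forall t e, 0 <= t <= 1 -> 0 < e ->
  exists2 del, 0 < del & forall s, 0 <= s <= 1 -> `|s - t| < del -> d (g t) (g s) < e.

Definition mclosure (A : set X) : set X :=
  [set x | forall e, 0 < e -> exists2 y, A y & d x y < e].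

Definition msplit (S U V : set X) :=
  [/\ mopen d U, mopen d V, S `<=` U `|` V & S `&` U `&` V = set0].

Lemma msplitC S U V : msplit S U V -> msplit S V U.
Proof.
case=> oU oV cov dis; split => //; first by move=> x /cov [] ; [right|left].
by rewrite setIAC.
Qed.

Lemma msplitS A S U V : A `<=` S -> msplit S U V -> msplit A U V.
Proof.
move=> AS [oU oV cov dis]; split => //; first by move=> x /AS /cov.
by apply/seteqP; split => // x [[/AS Sx Ux] Vx]; rewrite -dis.
Qed.

Lemma msplit_disj S U V x : msplit S U V -> S x -> U x -> V x -> False.
Proof.
case=> _ _ _ dis Sx Ux Vx; have SUVx : (S `&` U `&` V) x by [].
by rewrite dis in SUVx.
Qed.

Lemma mconnectedP S : mconnected d S <->
  forall U V, msplit S U V -> S `&` U = set0 \/ S `&` V = set0.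
Proof.
split => [cS U V [oU oV cov dis]|H [U [V [oU [oV [cov [SU [SV dis]]]]]]]].
  apply: contrapT => /not_orP [SU SV]; apply: cS; exists U, V.
  by do !split => //; apply/set0P/eqP.
have [|SU0|SV0] := H U V; first by [].
  by case: SU => x; rewrite SU0.
by case: SV => x; rewrite SV0.
Qed.

Lemma msplit_path S U V g : msplit S U V -> path_continuous g ->
  (forall t, 0 <= t <= 1 -> S (g t)) -> U (g 0) -> U (g 1).
Proof.
move=> sp gc gS U0; have [oU oV cov _] := sp.
pose I01 := [set t : R | 0 <= t <= 1].
have cI01 : connected I01.
  apply/connected_intervalP.
  have -> : I01 = [set` `[(0:R), 1]] by apply/seteqP; split => t /=; rewrite in_itv.
  exact: interval_is_interval.
pose pre (W : set X) := [set t | exists2 e, 0 < e &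
  forall s, 0 <= s <= 1 -> `|s - t| < e -> W (g s)].
have open_pre W : open (pre W).
  rewrite openE => t [e e0 He]; apply/nbhs_ballP; exists (e / 2) => /=; first lra.
  move=> t' /=; rewrite -ball_normE /= => tt'; exists (e / 2) => [|s Is st']; first lra.
  apply: He => //; have := ler_normD (s - t') (t' - t).
  rewrite distrC in tt'; have -> : s - t' + (t' - t) = s - t by ring.
  lra.
have in_pre W t : mopen d W -> I01 t -> W (g t) -> pre W t.
  move=> oW It /oW [e [e0 He]]; have [del del0 Hd] := gc t e It e0.
  by exists del => // s Is Hs; apply/He/Hd.
have pre_in W t : I01 t -> pre W t -> W (g t).
  by move=> It [e e0 He]; apply: He => //; rewrite subrr normr0.
suff E : [set t | I01 t /\ U (g t)] = I01.
  have I1 : I01 1 by rewrite /I01 /= ler01 lexx.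
  by move: I1; rewrite -E => -[].
apply: cI01.
- by exists 0; split => //; rewrite /I01 /= lexx ler01.
- exists (pre U); first exact: open_pre.
  by apply/seteqP; split => t /= [It Ut]; split => //; [apply: in_pre | apply: pre_in].
- exists (~` pre V); first exact/open_closedC/open_pre.
  apply/seteqP; split => t /= [It Ut]; split => //.
    by move/(pre_in V t It); apply: msplit_disj sp (gS t It) Ut.
  by case: (cov _ (gS t It)) => // /(in_pre V t oV It).
Qed.

Lemma mconnected_star S c : S c ->
  (forall y, S y -> exists g : R -> X,
     [/\ g 0 = y, g 1 = c, forall t, 0 <= t <= 1 -> S (g t) & path_continuous g]) ->
  mconnected d S.
Proof.
move=> Sc paths; apply/mconnectedP => U V sp.
have to_c W W' y : msplit S W W' -> S y -> W y -> W c.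
  move=> spW Sy Wy; have [g [g0 g1 gS gc]] := paths y Sy.
  by rewrite -g1; apply: msplit_path spW gc gS _; rewrite g0.
case: (pselect (S `&` U !=set0)) => [[y [Sy Uy]]|SU]; last first.
  by left; apply/seteqP; split => // x SUx; apply: SU; exists x.
right; apply/seteqP; split => // w [Sw Vw].
exact: msplit_disj sp Sc (to_c _ _ _ sp Sy Uy) (to_c _ _ _ (msplitC sp) Sw Vw).
Qed.

Lemma mconnected_closure_split A S U V z : mconnected d A -> A `<=` S ->
  msplit S U V -> mclosure A z -> U z -> A `<=` U.
Proof.
move=> cA AS sp Az Uz; have [oU _ _ _] := sp.
have [e [e0 He]] := oU z Uz; have [y Ay dzy] := Az e e0.
case/mconnectedP/(_ U V (msplitS AS sp)): cA => AUV.
  have AUy : (A `&` U) y by split => //; apply: He.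
  by rewrite AUV in AUy.
move=> x Ax; case: sp => _ _ cov _; case: (cov x (AS x Ax)) => // Vx.
have AVx : (A `&` V) x by [].
by rewrite AUV in AVx.
Qed.

Definition mside (a b : X) (s : bool) : set X :=
  if s then mediatrix_minus d a b else mediatrix_plus d a b.

Lemma topologically_transversal_local o a b :
  (forall x, mediatrix d o a x -> mediatrix d o b x -> forall e, 0 < e ->
     forall s1 s2, exists2 y, d x y < e & mside o a s1 y /\ mside o b s2 y) ->
  topologically_transversal d o a b.
Proof.
move=> near; right => x La Lb V [U [oU [Ux UV]]].
have [e [e0 He]] := oU x Ux.
have pt s1 s2 : (mside o a s1 `&` mside o b s2 `&` V) !=set0.
  by have [y dy [h1 h2]] := near x La Lb e e0 s1 s2; exists y; split => //; apply/UV/He.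
by split; [exact: (pt true true)|split; [exact: (pt true false)|split;
  [exact: (pt false true)|exact: (pt false false)]]].
Qed.

End MetricTopology.

Section MetricSpace.
Variables (R : realType) (X : Type) (d : X -> X -> R).
Hypothesis distC : forall x y, d x y = d y x.
Hypothesis dist_triangle : forall x y z, d x z <= d x y + d y z.
Hypothesis dist0 : forall x, d x x = 0.
Hypothesis dist_gt0 : forall x y, x <> y -> 0 < d x y.

Lemma mediatrixC a b : mediatrix d a b = mediatrix d b a.
Proof. by apply/seteqP; split => x /=. Qed.

Lemma mediatrix_plusE a b : mediatrix_plus d a b = mediatrix_minus d b a.
Proof. by apply/seteqP; split => x; rewrite /mediatrix_plus /mediatrix_minus /=; lra. Qed.

Lemma mopen_mediatrix_minus a b : mopen d (mediatrix_minus d a b).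
Proof.
move=> x; rewrite /mediatrix_minus /= => ax.
exists ((d b x - d a x) / 2); split => [|y]; first lra.
rewrite /mball /= => xy; have := dist_triangle a x y; have := dist_triangle b y x.
by rewrite (distC y x); lra.
Qed.

Lemma mediatrix_trichotomy a b x :
  mediatrix d a b x \/ mediatrix_minus d a b x \/ mediatrix_minus d b a x.
Proof.
rewrite /mediatrix /mediatrix_minus /= !(distC x).
by case: (ltrgtP (d a x) (d b x)) => h; [right; left|right; right|left]; lra.
Qed.

Lemma minimally_separating_mediatrix a b : a <> b ->
  mconnected d (mediatrix_minus d a b) -> mconnected d (mediatrix_minus d b a) ->
  mediatrix d a b `<=` mclosure d (mediatrix_minus d a b) ->
  mediatrix d a b `<=` mclosure d (mediatrix_minus d b a) ->
  minimally_separating d (mediatrix d a b).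
Proof.
move=> ab cM cP LM LP.
set L := mediatrix d a b; set M := mediatrix_minus d a b; set P := mediatrix_minus d b a.
have ML x : M x -> ~ L x by rewrite /L /M /mediatrix /mediatrix_minus /= !(distC x); lra.
have PL x : P x -> ~ L x by rewrite /L /P /mediatrix /mediatrix_minus /= !(distC x); lra.
have MP x : M x -> ~ P x by rewrite /P /M /mediatrix_minus /=; lra.
have Ma : M a by rewrite /M /mediatrix_minus /= dist0; have := dist_gt0 (nesym ab); lra.
have Pb : P b by rewrite /P /mediatrix_minus /= dist0; have := dist_gt0 ab; lra.
split.
  apply; exists M, P.
  split; first exact: mopen_mediatrix_minus.
  split; first exact: mopen_mediatrix_minus.
  split; first by move=> x /= nL; case: (mediatrix_trichotomy a b x) => [|[]]; [|left|right].
  split; first by exists a; split => //; apply: ML.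
  split; first by exists b; split => //; apply: PL.
  by apply/seteqP; split => x // [[_ Mx] Px]; apply: (MP x).
move=> L' L'L L'neq.
have [p [Lp L'p]] : exists p, L p /\ ~ L' p.
  apply: contrapT => nex; apply: L'neq; apply/seteqP; split => // x Lx.
  by apply: contrapT => L'x; apply: nex; exists x.
have ML' : M `<=` ~` L' by move=> x Mx /L'L; apply: ML.
have PL' : P `<=` ~` L' by move=> x Px /L'L; apply: PL.
have empty_other U V : msplit d (~` L') U V -> U p -> ~` L' `&` V = set0.
  move=> sp Up; have MU := mconnected_closure_split cM ML' sp (LM p Lp) Up.
  have PU := mconnected_closure_split cP PL' sp (LP p Lp) Up.
  apply/seteqP; split => // q [L'q Vq].
  case: (mediatrix_trichotomy a b q) => [Lq|[Mq|Pq]].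
  - have MV := mconnected_closure_split cM ML' (msplitC sp) (LM q Lq) Vq.
    exact: msplit_disj sp (ML' a Ma) (MU a Ma) (MV a Ma).
  - exact: msplit_disj sp L'q (MU q Mq) Vq.
  - exact: msplit_disj sp L'q (PU q Pq) Vq.
apply/mconnectedP => U V sp; have [_ _ cov _] := sp.
case: (cov p L'p) => [Up|Vp]; first by right; apply: empty_other sp Up.
by left; apply: empty_other (msplitC sp) Vp.
Qed.

End MetricSpace.

Section DiagonalForm.
Variables (R : comNzRingType) (m : nat) (w : 'I_m -> R).
Implicit Types u v z : 'rV[R]_m.

Definition dform u v := \sum_i w i * (u ord0 i * v ord0 i).

Lemma dformC u v : dform u v = dform v u.
Proof. by apply: eq_bigr => i _; rewrite [u _ _ * _]mulrC. Qed.

Lemma dformDl u v z : dform (u + v) z = dform u z + dform v z.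
Proof. by rewrite /dform -big_split; apply: eq_bigr => i _ /=; rewrite !mxE; ring. Qed.

Lemma dformZl k u z : dform (k *: u) z = k * dform u z.
Proof. by rewrite /dform mulr_sumr; apply: eq_bigr => i _; rewrite !mxE; ring. Qed.

Lemma dformNl u z : dform (- u) z = - dform u z.
Proof. by rewrite -scaleN1r dformZl mulN1r. Qed.

Lemma dformBl u v z : dform (u - v) z = dform u z - dform v z.
Proof. by rewrite dformDl dformNl. Qed.

Lemma dform0l z : dform 0 z = 0.
Proof. by rewrite -[0](scale0r 0) dformZl mul0r. Qed.

Lemma dformDr u v z : dform z (u + v) = dform z u + dform z v.
Proof. by rewrite dformC dformDl !(dformC z). Qed.

Lemma dformZr k u z : dform z (k *: u) = k * dform z u.
Proof. by rewrite dformC dformZl dformC. Qed.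

Lemma dformNr u z : dform z (- u) = - dform z u.
Proof. by rewrite dformC dformNl dformC. Qed.

Lemma dformBr u v z : dform z (u - v) = dform z u - dform z v.
Proof. by rewrite dformDr dformNr. Qed.

Lemma dform0r z : dform z 0 = 0.
Proof. by rewrite dformC dform0l. Qed.

End DiagonalForm.

Definition dformE := (dformDl, dformDr, dformZl, dformZr, dformNl, dformNr,
  dformBl, dformBr, dform0l, dform0r).

Lemma sqr_le_of_quadratic_ge0 (R : realFieldType) (A B C : R) : 0 <= B ->
  (forall t, 0 <= A + 2 * t * C + t ^+ 2 * B) -> C ^+ 2 <= A * B.
Proof.
move=> B0 q_ge0.
have A0 : 0 <= A by have := q_ge0 0; rewrite !(mul0r, mulr0, expr0n, addr0).
case: (ltrgtP B 0) => hB; first lra.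
  have := q_ge0 (- C / B).
  have -> : A + 2 * (- C / B) * C + (- C / B) ^+ 2 * B = A - C ^+ 2 / B.
    by field; exact: lt0r_neq0.
  by rewrite subr_ge0 ler_pdivrMr.
rewrite hB mulr0; case: (eqVneq C 0) => [->|C0]; first by rewrite expr0n.
have := q_ge0 (- (A + 1) / (2 * C)); rewrite hB mulr0 addr0.
have -> : 2 * (- (A + 1) / (2 * C)) * C = - (A + 1) by field.
lra.
Qed.

Section Gram.
Variables (R : realFieldType) (m : nat) (w : 'I_m -> R).
Local Notation B := (dform w).
Implicit Types u v z : 'rV[R]_m.

Definition dgram u v := B u u * B v v - B u v ^+ 2.

Lemma dform_gram_solve u v : dgram u v != 0 -> forall s1 s2,
  exists h, [/\ B h u = s1, B h v = s2 &
    forall z, B z u = 0 -> B z v = 0 -> B z h = 0].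
Proof.
move=> D0 s1 s2; set D := dgram u v.
exists (((s1 * B v v - s2 * B u v) / D) *: u + ((s2 * B u u - s1 * B u v) / D) *: v).
split; rewrite ?dformE ?(dformC w v u) /D /dgram; try by field.
by move=> z zu zv; rewrite !dformE zu zv; ring.
Qed.

(* A line meets a quadric level set {p | B p p = K} in at most two points. *)
Lemma quadric_noncollinear K O A C k :
  B O O = K -> B A A = K -> B C C = K -> (B O C = K -> O = C) ->
  O != A -> O != C -> A != C -> O - A != k *: (O - C).
Proof.
move=> OK AK CK OC_eq OA OC AC; apply/eqP => hk.
have eA : A = O - k *: (O - C) by rewrite -hk subKr.
move: AK; rewrite eA !dformE OK CK (dformC w C O) => AK.
have : 2 * k * (1 - k) * (B O C - K) = 0 by nra.
move/eqP; rewrite !mulf_eq0 !subr_eq0 pnatr_eq0 /= => /orP [/orP [k0|k1]|/eqP/OC_eq OC'].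
- by move: OA; rewrite eA (eqP k0) scale0r subr0 eqxx.
- by move: AC; rewrite eA -(eqP k1) scale1r subKr eqxx.
- by move: OC; rewrite OC' eqxx.
Qed.

End Gram.

Definition signb (R : pzRingType) (s : bool) : R := if s then 1 else -1.

Lemma signb_sqr (R : pzRingType) s : signb R s * signb R s = 1.
Proof. by case: s; rewrite /signb ?mulrNN mulr1. Qed.

Lemma signb_neq0 (R : nzRingType) s : signb R s != 0.
Proof. by case: s; rewrite /signb ?oppr_eq0 oner_eq0. Qed.

(* Each model space embeds into 'rV_m with a diagonal form B such that the side of
   L_ab containing y is decided by comparing B (emb a - emb b) (emb y) with a
   constant, and the directions in which one can move away from x along a
   geodesic are the h with B (nrml x) h = 0 (nrml x = emb x on S^n and H^n,
   nrml x = 0 on R^n). *)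
Section LinearModel.
Variables (R : realType) (X : Type) (d : X -> X -> R) (m : nat) (w : 'I_m -> R).
Local Notation B := (dform w).
Variables (emb nrml : X -> 'rV[R]_m) (level : X -> X -> R).
Hypothesis distC : forall x y, d x y = d y x.
Hypothesis dist_triangle : forall x y z, d x z <= d x y + d y z.
Hypothesis dist0 : forall x, d x x = 0.
Hypothesis dist_gt0 : forall x y, x <> y -> 0 < d x y.
Hypothesis emb_inj : injective emb.
Hypothesis dist_ltE : forall a b y,
  (d a y < d b y) <-> level a b < B (emb a - emb b) (emb y).
Hypothesis levelC : forall a b, level b a = - level a b.
Hypothesis mediatrix_nrml : forall a b x,
  mediatrix d a b x -> B (emb a - emb b) (nrml x) = 0.
Hypothesis tangent_gt0 : forall x h, B (nrml x) h = 0 -> h != 0 -> 0 < B h h.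
Hypothesis tangent_step : forall x h e, B (nrml x) h = 0 -> h != 0 -> 0 < e ->
  exists2 y, d x y < e & exists2 k, 0 < k &
    forall c, B c (nrml x) = 0 -> B c (emb y - emb x) = k * B c h.
Hypothesis equidistant_noncollinear : forall x o a b, o <> a -> o <> b -> a <> b ->
  d x o = d x a -> d x o = d x b -> forall k, emb o - emb a != k *: (emb o - emb b).

Lemma mediatrix_level a b x : mediatrix d a b x -> B (emb a - emb b) (emb x) = level a b.
Proof.
rewrite /mediatrix /= !(distC x) => ab; apply/eqP; rewrite eq_le !leNgt.
apply/andP; split; apply/negP.
  by move/dist_ltE; rewrite ab ltxx.
have -> : B (emb a - emb b) (emb x) = - B (emb b - emb a) (emb x) by rewrite -dformNl opprB.
by rewrite ltrNl -levelC => /dist_ltE; rewrite ab ltxx.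
Qed.

Lemma mside_near a b x s y : mediatrix d a b x ->
  mside d a b s y <-> 0 < signb R s * B (emb a - emb b) (emb y - emb x).
Proof.
move=> /mediatrix_level Lx; rewrite dformBr Lx; case: s; rewrite /signb /=.
  by rewrite /mediatrix_minus /= subr_lt0 dist_ltE mul1r subr_gt0.
rewrite (mediatrix_plusE d) /mediatrix_minus /= subr_lt0 dist_ltE levelC.
have -> : B (emb b - emb a) (emb y) = - B (emb a - emb b) (emb y) by rewrite -dformNl opprB.
by rewrite ltrN2 mulN1r oppr_gt0 subr_lt0.
Qed.

Lemma tangent_mediatrix a b x : mediatrix d a b x -> B (nrml x) (emb a - emb b) = 0.
Proof. by move=> /mediatrix_nrml; rewrite dformC. Qed.

Lemma mediatrix_sub_closure a b : a <> b ->
  mediatrix d a b `<=` mclosure d (mediatrix_minus d a b).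
Proof.
move=> ab x Lx e e0; set h := emb a - emb b.
have h0 : h != 0 by rewrite subr_eq0; apply/eqP => /emb_inj.
have [y dxy [k k0 hk]] := tangent_step (tangent_mediatrix Lx) h0 e0.
exists y => //; apply/(@mside_near a b x true y Lx).
rewrite mul1r hk ?mediatrix_nrml //.
exact/mulr_gt0/(tangent_gt0 (tangent_mediatrix Lx) h0).
Qed.

Lemma gram_mediatrices_neq0 o a b x : o <> a -> o <> b -> a <> b ->
  mediatrix d o a x -> mediatrix d o b x -> dgram w (emb o - emb a) (emb o - emb b) != 0.
Proof.
move=> oa ob ab La Lb; set u := emb o - emb a; set v := emb o - emb b.
apply/eqP => D0.
have ut : B (nrml x) u = 0 := tangent_mediatrix La.
have vt : B (nrml x) v = 0 := tangent_mediatrix Lb.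
have v0 : v != 0 by rewrite subr_eq0; apply/eqP => /emb_inj.
have uv : forall k, u != k *: v := equidistant_noncollinear oa ob ab La Lb.
clearbody u v.
have vv0 : 0 < B v v := tangent_gt0 vt v0.
(* W is a tangent vector with B W W = 0, hence W = 0 and u is parallel to v. *)
set W := B v v *: u - B u v *: v.
have Wt : B (nrml x) W = 0 by rewrite !dformE ut vt; ring.
have WW : B W W = B v v * dgram w u v.
  by rewrite !dformE (dformC w v u) /dgram; ring.
rewrite D0 mulr0 in WW.
have W0 : W = 0 by apply: contrapT => /eqP W0; have := tangent_gt0 Wt W0; rewrite WW ltxx.
have uk : u = (B u v / B v v) *: v.
  move/eqP: W0; rewrite subr_eq0 => /eqP /(congr1 (fun z => (B v v)^-1 *: z)).
  by rewrite !scalerA mulVf ?(lt0r_neq0 vv0) // scale1r mulrC.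
by have /eqP := uv (B u v / B v v); rewrite -uk.
Qed.

Lemma mediatrices_sides_near o a b : o <> a -> o <> b -> a <> b ->
  forall x, mediatrix d o a x -> mediatrix d o b x -> forall e, 0 < e ->
  forall s1 s2, exists2 y, d x y < e & mside d o a s1 y /\ mside d o b s2 y.
Proof.
move=> oa ob ab x La Lb e e0 s1 s2.
have [h [hu hv h_perp]] := dform_gram_solve (gram_mediatrices_neq0 oa ob ab La Lb)
  (signb R s1) (signb R s2).
have ht : B (nrml x) h = 0 by apply: h_perp; apply: tangent_mediatrix.
have h0 : h != 0.
  by apply: (contraTneq _ (signb_neq0 R s1)) => h0; rewrite -hu h0 dform0l eqxx.
have [y dxy [k k0 hk]] := tangent_step ht h0 e0.
exists y => //; split; [apply/(mside_near _ _ La)|apply/(mside_near _ _ Lb)];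
  rewrite hk ?mediatrix_nrml // dformC ?hu ?hv mulrCA signb_sqr mulr1 //.
Qed.

Theorem Brillouin_of_model : metrically_consistent d ->
  (forall a b, a <> b -> mconnected d (mediatrix_minus d a b)) -> Brillouin d.
Proof.
move=> mc conn; split => //; split => [a b ab|o a b oa ob ab].
  apply: minimally_separating_mediatrix => //.
  - exact: conn.
  - exact/conn/nesym.
  - exact: mediatrix_sub_closure.
  - by rewrite mediatrixC; apply/mediatrix_sub_closure/nesym.
exact/topologically_transversal_local/mediatrices_sides_near.
Qed.

End LinearModel.

Lemma small_scale (R : realFieldType) (N e : R) : 0 <= N -> 0 < e ->
  exists2 del, 0 < del & forall t, 0 <= t -> t < del -> t * N < e.
Proof.
move=> N0 e0; exists (e / (N + 1)) => [|t t0 tdel]; first by apply: divr_gt0; lra.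
have : t * (N + 1) < e by rewrite -ltr_pdivlMr //; lra.
nra.
Qed.

Lemma dform_normalize (R : rcfType) m (w : 'I_m -> R) u : 0 < dform w u u ->
  let g := (Num.sqrt (dform w u u))^-1 *: u in dform w g g = 1.
Proof.
move=> uu g; rewrite /g dformZl dformZr mulrA -expr2 exprVn sqr_sqrtr ?ltW //.
by rewrite mulVf ?gt_eqF.
Qed.

Section Dot.
Variables (R : rcfType) (m : nat).
Implicit Types u v p q : 'rV[R]_m.

Definition dot u v := dform (fun _ : 'I_m => 1 : R) u v.

Lemma dotC u v : dot u v = dot v u.
Proof. exact: dformC. Qed.

Lemma dotE u v : dot u v = \sum_i u ord0 i * v ord0 i.
Proof. by apply: eq_bigr => i _; rewrite mul1r. Qed.

Lemma dotxx_ge0 u : 0 <= dot u u.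
Proof. by rewrite dotE; apply: sumr_ge0 => i _; rewrite -expr2 sqr_ge0. Qed.

Lemma dotxx_eq0 u : dot u u = 0 -> u = 0.
Proof.
rewrite dotE => /eqP; rewrite psumr_eq0 => [/allP u0|i _]; last by rewrite -expr2 sqr_ge0.
apply/rowP => i; rewrite mxE; have := u0 i (mem_index_enum i).
by rewrite -expr2 sqrf_eq0 => /eqP.
Qed.

Lemma dotxx_gt0 u : u != 0 -> 0 < dot u u.
Proof.
move=> u0; rewrite lt_neqAle dotxx_ge0 andbT eq_sym.
by apply: contraNneq u0 => /dotxx_eq0 ->.
Qed.

Lemma dot_sqr_le u v : dot u v ^+ 2 <= dot u u * dot v v.
Proof.
apply: sqr_le_of_quadratic_ge0 (dotxx_ge0 v) _ => t.
by have := dotxx_ge0 (u + t *: v); rewrite /dot !dformE (dformC _ v u); lra.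
Qed.

Lemma dotBB u v : dot (u - v) (u - v) = dot u u - 2 * dot u v + dot v v.
Proof. by rewrite /dot !dformE (dformC _ v u); ring. Qed.

Definition nrm u := Num.sqrt (dot u u).

Lemma nrm_ge0 u : 0 <= nrm u. Proof. exact: sqrtr_ge0. Qed.

Lemma nrm_sqr u : nrm u ^+ 2 = dot u u. Proof. by rewrite sqr_sqrtr // dotxx_ge0. Qed.

Lemma dot_le_nrm u v : dot u v <= nrm u * nrm v.
Proof.
have := dot_sqr_le u v; rewrite -!nrm_sqr -exprMn => h.
have := mulr_ge0 (nrm_ge0 u) (nrm_ge0 v); nra.
Qed.

Lemma nrm_triangle u v : nrm (u + v) <= nrm u + nrm v.
Proof.
have uv0 : 0 <= nrm u + nrm v by have := nrm_ge0 u; have := nrm_ge0 v; lra.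
rewrite -(ger0_norm uv0) -sqrtr_sqr {1}/nrm ler_sqrt ?sqr_ge0 //.
have := dot_le_nrm u v; have := nrm_sqr u; have := nrm_sqr v.
by rewrite /dot !dformE (dformC _ v u) -/(dot u u) -/(dot v v) -/(dot u v); nra.
Qed.

Lemma nrmZ k u : nrm (k *: u) = `|k| * nrm u.
Proof. by rewrite /nrm /dot !dformE mulrA -expr2 sqrtrM ?sqr_ge0 // sqrtr_sqr. Qed.

Lemma nrmN u : nrm (- u) = nrm u.
Proof. by rewrite -scaleN1r nrmZ normrN1 mul1r. Qed.

Lemma nrm_gt0 u : u != 0 -> 0 < nrm u.
Proof. by move=> u0; rewrite sqrtr_gt0 dotxx_gt0. Qed.

Lemma internally_tangent_spheres (r s : R) u v : 0 < r < s ->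
  dot u u = s ^+ 2 -> dot v v = s ^+ 2 ->
  dot ((r / s) *: u - v) ((r / s) *: u - v) = (s - r) ^+ 2 -> v = u.
Proof.
move=> /andP [r0 rs] uu vv; set k := r / s.
have s0 : s != 0 by rewrite gt_eqF //; lra.
have k0 : k != 0 by rewrite mulf_neq0 ?invr_eq0 // gt_eqF.
have ks : k * s = r by rewrite /k divfK.
rewrite dotBB /dot !dformZl !dformZr -!/(dot _ _) uu vv => h.
have uv : dot u v = s ^+ 2.
  rewrite -ks in h; have e : 2 * k * (dot u v - s ^+ 2) =
    (s - k * s) ^+ 2 - (k * (k * s ^+ 2) - 2 * (k * dot u v) + s ^+ 2) by ring.
  have k2 : 2 * k != 0 by rewrite mulf_neq0 // pnatr_eq0.
  by apply/subr0_eq/(mulfI k2); rewrite mulr0 e -h subrr.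
by apply/subr0_eq/dotxx_eq0; rewrite dotBB dotC uv uu vv; ring.
Qed.

End Dot.

Section Euclid.
Variables (R : realType) (n : nat).
Local Notation V := 'rV[R]_n.
Local Notation d := (@euclid_dist R n).
Local Notation Q v := (dot v v).
Implicit Types a b o x y z h : V.

Lemma euclid_distE x y : d x y = nrm (x - y).
Proof.
rewrite /euclid_dist /nrm dotE; congr Num.sqrt; apply: eq_bigr => i _.
by rewrite !mxE expr2.
Qed.

Lemma euclid_distC x y : d x y = d y x.
Proof. by rewrite !euclid_distE -nrmN opprB. Qed.

Lemma euclid_dist_triangle x y z : d x z <= d x y + d y z.
Proof. by rewrite !euclid_distE -[x - z](subrKA y) nrm_triangle. Qed.

Lemma euclid_dist0 x : d x x = 0.
Proof. by rewrite euclid_distE subrr /nrm /dot dform0l sqrtr0. Qed.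

Lemma euclid_dist_gt0 x y : x <> y -> 0 < d x y.
Proof. by move=> /eqP; rewrite -subr_eq0 euclid_distE; apply: nrm_gt0. Qed.

Lemma euclid_dist_ltE a b y :
  (d a y < d b y) <-> (Q a - Q b) / 2 < dot (a - b) y.
Proof.
rewrite !euclid_distE /nrm !ltNge ler_psqrt ?nnegrE ?dotxx_ge0 // -ltNge.
by rewrite /dot !dformE (dformC _ y a) (dformC _ y b); split => ?; lra.
Qed.

Lemma euclid_step x h e : h != 0 -> 0 < e ->
  exists2 y, d x y < e & exists2 k, 0 < k & forall c, dot c (y - x) = k * dot c h.
Proof.
move=> h0 e0; have [del del0 small] := small_scale (nrm_ge0 h) e0.
have t0 : 0 < del / 2 by lra.
exists (x + (del / 2) *: h).
  by rewrite euclid_distE opprD addNKr nrmN nrmZ gtr0_norm //; apply: small; lra.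
by exists (del / 2) => // c; rewrite addrC addKr /dot dformZr.
Qed.

Lemma euclid_equidistant_noncollinear x o a b : o <> a -> o <> b -> a <> b ->
  d x o = d x a -> d x o = d x b -> forall k, o - a != k *: (o - b).
Proof.
move=> /eqP oa /eqP ob /eqP ab xoa xob k.
have sqr_dist y : d x y = d x o -> Q (y - x) = Q (o - x).
  by rewrite !(euclid_distC x) !euclid_distE => yo; rewrite -!nrm_sqr yo.
have shift y z : (y - x) - (z - x) = y - z by rewrite opprB addrA subrK.
rewrite -(shift o a) -(shift o b); apply: (quadric_noncollinear (K := Q (o - x))) => //.
- exact/sqr_dist/esym.
- exact/sqr_dist/esym.
- move=> oxbx; have {}oxbx : dot (o - x) (b - x) = Q (o - x) := oxbx.
  apply/subr0_eq/dotxx_eq0.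
  by rewrite dotBB oxbx (sqr_dist b) ?xob //; ring.
- by rewrite -subr_eq0 shift subr_eq0.
- by rewrite -subr_eq0 shift subr_eq0.
- by rewrite -subr_eq0 shift subr_eq0.
Qed.

Lemma euclid_segment_continuous y p : path_continuous d (fun t => y + t *: (p - y)).
Proof.
move=> t e _ e0; have [del del0 small] := small_scale (nrm_ge0 (p - y)) e0.
exists del => // s _ st; rewrite euclid_distE opprD addrACA subrr add0r -scalerBl.
by rewrite nrmZ distrC small.
Qed.

Lemma euclid_mconnected_mediatrix_minus a b : a <> b ->
  mconnected d (mediatrix_minus d a b).
Proof.
move=> ab; set lev := (Q a - Q b) / 2.
have minusE y : mediatrix_minus d a b y <-> lev < dot (a - b) y.
  by rewrite /mediatrix_minus /= subr_lt0 euclid_dist_ltE.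
have Ma : lev < dot (a - b) a.
  apply/minusE; rewrite /mediatrix_minus /= euclid_dist0 subr_lt0.
  exact/euclid_dist_gt0/nesym.
apply: (mconnected_star (c := a)); first exact/minusE.
move=> y /minusE My; exists (fun t => y + t *: (a - y)); split.
- by rewrite scale0r addr0.
- by rewrite scale1r subrKC.
- move=> t /andP [t0 t1]; apply/minusE.
  have -> : dot (a - b) (y + t *: (a - y)) =
      (1 - t) * dot (a - b) y + t * dot (a - b) a by rewrite /dot !dformE; ring.
  have : 0 <= (1 - t) * (dot (a - b) y - lev) by apply: mulr_ge0; lra.
  have : 0 <= t * (dot (a - b) a - lev) by apply: mulr_ge0; lra.
  by case: (ltrP 0 t) => ht; nra.
- exact: euclid_segment_continuous.
Qed.

Lemma euclid_metrically_consistent : metrically_consistent d.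
Proof.
move=> x s r r0 rs a; rewrite /msphere /= => xa; set k := r / s.
have s0 : 0 < s by lra.
have k01 : 0 < k < 1 by rewrite divr_gt0 //= ltr_pdivrMr // mul1r.
have na : nrm (a - x) = s by rewrite -nrmN opprB -euclid_distE.
set z := x + k *: (a - x).
have xz : d x z = r.
  rewrite euclid_distE opprD addNKr nrmN nrmZ na gtr0_norm; last by case/andP: k01.
  by rewrite /k divfK ?gt_eqF.
have za : d z a = s - r.
  rewrite euclid_distE.
  have -> : z - a = - ((1 - k) *: (a - x)) by apply/rowP => i; rewrite !mxE; ring.
  rewrite nrmN nrmZ na gtr0_norm; last by case/andP: k01 => _; rewrite subr_gt0.
  by rewrite mulrBl mul1r /k divfK ?gt_eqF.
exists z; split; first by rewrite /msphere /= xz.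
split.
  move=> y; rewrite /mball /= za => zy.
  by have := euclid_dist_triangle x z y; rewrite xz; lra.
apply/seteqP; split => [y [/= zy xy]|y -> //]; rewrite /msphere za in zy xy.
suff : y - x = a - x by move/(congr1 (fun v => v + x)); rewrite !subrK.
apply: (internally_tangent_spheres (r := r) (s := s)).
- by rewrite r0.
- by rewrite -nrm_sqr na.
- by rewrite -nrm_sqr -euclid_distE euclid_distC xy.
- have -> : k *: (a - x) - (y - x) = z - y by apply/rowP => i; rewrite !mxE; ring.
  by rewrite -nrm_sqr -euclid_distE zy.
Qed.

Theorem euclid_Brillouin : Brillouin d.
Proof.
apply: (Brillouin_of_model (emb := id) (nrml := fun=> 0) (w := fun=> 1)
  (level := fun a b => (Q a - Q b) / 2)).
- exact: euclid_distC.
- exact: euclid_dist_triangle.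
- exact: euclid_dist0.
- exact: euclid_dist_gt0.
- by [].
- exact: euclid_dist_ltE.
- by move=> a b; rewrite -mulNr opprB.
- by move=> a b x _; rewrite dform0r.
- by move=> x h _; apply: dotxx_gt0.
- move=> x h e _ h0 e0; have [y dxy [k k0 hk]] := euclid_step x h0 e0.
  by exists y => //; exists k => // c _; apply: hk.
- exact: euclid_equidistant_noncollinear.
- exact: euclid_metrically_consistent.
- exact: euclid_mconnected_mediatrix_minus.
Qed.

End Euclid.

Section Trig.
Variable R : realType.
Implicit Types p q u v : R.

Lemma acos_ltE p q : -1 <= p <= 1 -> -1 <= q <= 1 -> (acos p < acos q) = (q < p).
Proof.
move=> hp hq.
have ip : acos p \in `[0, pi] by rewrite in_itv /= acos_ge0 // acos_lepi.
have iq : acos q \in `[0, pi] by rewrite in_itv /= acos_ge0 // acos_lepi.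
by rewrite -(ltr_cos ip iq) !acosK // in_itv /=.
Qed.

Lemma acos_cos_abs u : -pi <= u <= pi -> acos (cos u) = `|u|.
Proof.
move=> /andP [piu upi]; case: (lerP 0 u) => u0.
  by rewrite ger0_norm // cosK // in_itv /= u0.
by rewrite ltr0_norm // cosKN // piu ltW.
Qed.

End Trig.

Section UnitVectors.
Variables (R : realType) (m : nat).
Local Notation V := 'rV[R]_m.
Local Notation Q v := (dot v v).
Implicit Types x y z g a c : V.

Lemma unit_dot_bounds x y : Q x = 1 -> Q y = 1 -> -1 <= dot x y <= 1.
Proof.
move=> x1 y1; have := dotxx_ge0 (x - y); have := dotxx_ge0 (x + y).
rewrite dotBB /dot !dformE (dformC _ y x) -!/(dot _ _) x1 y1.
by move=> h1 h2; apply/andP; split; lra.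
Qed.

Lemma unit_dot_eq1 x y : Q x = 1 -> Q y = 1 -> dot x y = 1 -> x = y.
Proof.
by move=> x1 y1 xy; apply/subr0_eq/dotxx_eq0; rewrite dotBB x1 y1 xy; ring.
Qed.

Lemma unit_dot_triangle x y z : Q x = 1 -> Q y = 1 -> Q z = 1 ->
  dot x y * dot y z - Num.sqrt (1 - dot x y ^+ 2) * Num.sqrt (1 - dot y z ^+ 2)
    <= dot x z.
Proof.
move=> x1 y1 z1; set cA := dot x y; set cB := dot y z.
have nrm_perp c k : Q c = 1 -> dot c y = k -> nrm (c - k *: y) = Num.sqrt (1 - k ^+ 2).
  move=> c1 <-; rewrite /nrm dotBB /dot !dformE -!/(dot _ _) c1 y1.
  by congr Num.sqrt; ring.
have := dot_le_nrm (- (x - cA *: y)) (z - cB *: y).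
rewrite nrmN (nrm_perp x cA) // (nrm_perp z cB) ?(dotC z y) //.
by rewrite /cA /cB /dot !dformE -!/(dot _ _) y1; lra.
Qed.

Definition great_arc x g (t : R) : V := cos t *: x + sin t *: g.

Lemma great_arc_dotr c x g t : dot c (great_arc x g t) = cos t * dot c x + sin t * dot c g.
Proof. by rewrite /great_arc /dot !dformE. Qed.

Lemma great_arc_dot x g s t : Q x = 1 -> Q g = 1 -> dot x g = 0 ->
  dot (great_arc x g s) (great_arc x g t) = cos (s - t).
Proof.
move=> x1 g1 xg; rewrite /great_arc /dot !dformE -!/(dot _ _) (dotC g x) x1 g1 xg.
by rewrite cosB; ring.
Qed.

Lemma great_arc_unit x g t : Q x = 1 -> Q g = 1 -> dot x g = 0 ->
  Q (great_arc x g t) = 1.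
Proof. by move=> x1 g1 xg; rewrite great_arc_dot // subrr cos0. Qed.

Lemma great_arc0 x g : great_arc x g 0 = x.
Proof. by rewrite /great_arc cos0 sin0 scale1r scale0r addr0. Qed.

(* For 0 <= s <= th < pi both coefficients are nonnegative: a linear functional
   positive at both ends of a great arc is positive along it. *)
Lemma great_arc_interpolate c x g th s :
  sin th * dot c (great_arc x g s) =
  sin (th - s) * dot c x + sin s * dot c (great_arc x g th).
Proof. by rewrite !great_arc_dotr sinB; ring. Qed.

Lemma great_arc_through x a : Q x = 1 -> Q a = 1 -> -1 < dot x a < 1 ->
  exists g, [/\ Q g = 1, dot x g = 0 & great_arc x g (acos (dot x a)) = a].
Proof.
move=> x1 a1 /andP [xa_gt xa_lt]; set th := acos (dot x a).
have xa_in : -1 <= dot x a <= 1 by rewrite !ltW.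
have cth : cos th = dot x a by rewrite /th acosK // in_itv.
have sth : 0 < sin th by rewrite /th sin_acos // sqrtr_gt0; nra.
have s2 : sin th ^+ 2 = 1 - dot x a ^+ 2 by rewrite sin2cos2 cth.
have s0 : sin th != 0 by rewrite gt_eqF.
exists ((sin th)^-1 *: (a - cos th *: x)); split.
- rewrite /dot !dformE -!/(dot _ _) (dotC a x) x1 a1 cth.
  have -> : 1 - dot x a * dot x a = sin th ^+ 2 by rewrite s2 expr2.
  by field.
- by rewrite /dot !dformE -!/(dot _ _) x1 cth; field.
- by apply/rowP => i; rewrite /great_arc !mxE; field.
Qed.

Lemma exists_unit_perp x : (1 < m)%N -> exists g, Q g = 1 /\ dot x g = 0.
Proof.
move=> m1; pose i0 : 'I_m := Ordinal (ltnW m1); pose i1 : 'I_m := Ordinal m1.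
have i01 : i1 != i0 by rewrite -val_eqE.
have dot_delta y i : dot y (delta_mx 0 i) = y ord0 i.
  rewrite dotE (bigD1 i) //= big1 => [|j ji]; first by rewrite !mxE !eqxx mulr1 addr0.
  by rewrite !mxE (negbTE ji) andbF mulr0.
have delta_unit i : Q (delta_mx 0 i : V) = 1 by rewrite dot_delta mxE !eqxx.
pose p : V := x ord0 i1 *: delta_mx 0 i0 - x ord0 i0 *: delta_mx 0 i1.
have [p0|p_neq0] := eqVneq p 0.
  exists (delta_mx 0 i0); split; first exact: delta_unit.
  rewrite dot_delta; have := congr1 (fun q : V => q ord0 i1) p0.
  by rewrite !mxE !eqxx (negbTE i01) andbF mulr0 sub0r mulr1 => /eqP; rewrite oppr_eq0 => /eqP.
have pp := dotxx_gt0 p_neq0.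
exists ((Num.sqrt (Q p))^-1 *: p); split; first exact: dform_normalize.
by rewrite /dot dformZr -/(dot x p) /p /dot !dformE -!/(dot _ _) !dot_delta; ring.
Qed.

End UnitVectors.

Section Sphere.
Variables (R : realType) (n : nat).
Local Notation X := (sphere_pt R n).
Local Notation V := 'rV[R]_n.+1.
Local Notation d := (@sphere_dist R n).
Local Notation Q v := (dot v v).
Implicit Types x y z a b o : X.

Definition svec (x : X) : V := proj1_sig x.

Lemma svec_unit x : Q (svec x) = 1.
Proof. by rewrite dotE -(proj2_sig x); apply: eq_bigr => i _; rewrite expr2. Qed.

Lemma svec_inj : injective svec.
Proof. by move=> [x x1] [y y1] /= xy; subst y; congr exist; apply: eq_irrelevance. Qed.

Lemma sum_sqr_unit (v : V) : Q v = 1 -> \sum_(i < n.+1) v ord0 i ^+ 2 = 1.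
Proof. by rewrite dotE => <-; apply: eq_bigr => i _; rewrite expr2. Qed.

Definition to_sphere (v : V) (v1 : Q v = 1) : X := exist _ v (sum_sqr_unit v1).

Lemma sphere_distE x y : d x y = acos (dot (svec x) (svec y)).
Proof. by rewrite /sphere_dist dotE. Qed.

Lemma sphere_dot_bounds x y : -1 <= dot (svec x) (svec y) <= 1.
Proof. exact: unit_dot_bounds (svec_unit x) (svec_unit y). Qed.

Lemma cos_sphere_dist x y : cos (d x y) = dot (svec x) (svec y).
Proof. by rewrite sphere_distE acosK // in_itv /= sphere_dot_bounds. Qed.

Lemma sphere_dist_ge0 x y : 0 <= d x y.
Proof. by rewrite sphere_distE acos_ge0 // sphere_dot_bounds. Qed.

Lemma sphere_dist_lepi x y : d x y <= pi.
Proof. by rewrite sphere_distE acos_lepi // sphere_dot_bounds. Qed.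

Lemma sphere_distC x y : d x y = d y x.
Proof. by rewrite !sphere_distE dotC. Qed.

Lemma sphere_dist0 x : d x x = 0.
Proof. by rewrite sphere_distE svec_unit acos1. Qed.

Lemma sphere_dot_lt1 x y : x <> y -> dot (svec x) (svec y) < 1.
Proof.
move=> xy; have /andP [_ le1] := sphere_dot_bounds x y; rewrite lt_neqAle le1 andbT.
by apply/eqP => /(unit_dot_eq1 (svec_unit x) (svec_unit y)) /svec_inj.
Qed.

Lemma sphere_dot_eqN1 x y : dot (svec x) (svec y) = -1 -> svec y = - svec x.
Proof.
move=> xy; apply: unit_dot_eq1; rewrite ?svec_unit //.
  by rewrite /dot dformNl dformNr opprK -/(dot _ _) svec_unit.
by rewrite /dot dformNr dformC -/(dot _ _) xy opprK.
Qed.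

Lemma sphere_dist_gt0 x y : x <> y -> 0 < d x y.
Proof.
move=> xy; rewrite sphere_distE acos_gt0 //; have /andP [-> _] := sphere_dot_bounds x y.
exact: sphere_dot_lt1.
Qed.

Lemma sphere_dist_triangle x y z : d x z <= d x y + d y z.
Proof.
have [A B] := (sphere_dist_ge0 x y, sphere_dist_ge0 y z).
have [pi_le|lt_pi] := lerP pi (d x y + d y z); first by have := sphere_dist_lepi x z; lra.
have Ixz : d x z \in `[0, pi] by rewrite in_itv /= sphere_dist_ge0 sphere_dist_lepi.
have IAB : d x y + d y z \in `[0, pi] by rewrite in_itv /= addr_ge0 // ltW.
rewrite leNgt -(ltr_cos IAB Ixz) -leNgt.
rewrite cos_sphere_dist cosD !cos_sphere_dist !sphere_distE !sin_acos ?sphere_dot_bounds //.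
exact: unit_dot_triangle (svec_unit x) (svec_unit y) (svec_unit z).
Qed.

Lemma sphere_dist_ltE a b y : (d a y < d b y) <-> 0 < dot (svec a - svec b) (svec y).
Proof.
rewrite !sphere_distE acos_ltE ?sphere_dot_bounds // /dot dformBl subr_gt0.
by rewrite !(dformC _ _ (svec y)).
Qed.

Section Arc.
Variables (x : X) (g : V).
Hypotheses (g1 : Q g = 1) (xg : dot (svec x) g = 0).

Definition sphere_arc t : X := to_sphere (great_arc_unit t (svec_unit x) g1 xg).

Lemma svec_arc t : svec (sphere_arc t) = great_arc (svec x) g t.
Proof. by []. Qed.

Lemma sphere_arc0 : sphere_arc 0 = x.
Proof. by apply: svec_inj; rewrite svec_arc great_arc0. Qed.

Lemma sphere_arc_dist s t : `|s - t| <= pi -> d (sphere_arc s) (sphere_arc t) = `|s - t|.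
Proof.
rewrite ler_norml => st; rewrite sphere_distE !svec_arc great_arc_dot ?svec_unit //.
exact: acos_cos_abs.
Qed.

Lemma sphere_arc_continuous th : 0 <= th <= pi ->
  path_continuous d (fun t => sphere_arc (t * th)).
Proof.
move=> /andP [th0 thpi] t e /andP [t0 t1] e0.
have [del del0 small] := small_scale th0 e0.
exists (Num.min del 1) => [|s /andP [s0 s1]]; first by rewrite lt_min del0 ltr01.
rewrite lt_min => /andP [st_del st1] /=.
rewrite sphere_arc_dist -mulrBl normrM (ger0_norm th0) distrC.
  exact: small.
by rewrite -[pi]mul1r ler_pM // ltW.
Qed.

End Arc.

Lemma sphere_tangent_step x h e : dot (svec x) h = 0 -> h != 0 -> 0 < e ->
  exists2 y, d x y < e & exists2 k, 0 < k &
    forall c, dot c (svec x) = 0 -> dot c (svec y - svec x) = k * dot c h.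
Proof.
move=> xh h0 e0; set th := Num.min (e / 2) (pi / 2).
have pi0 := pi_gt0 R.
have th0 : 0 < th by rewrite lt_min; apply/andP; split; lra.
have [the thpi] : th <= e / 2 /\ th <= pi / 2 by split; rewrite ge_min lexx ?orbT.
set g := (Num.sqrt (Q h))^-1 *: h.
have g1 : Q g = 1 by apply: dform_normalize; apply: dotxx_gt0.
have xg : dot (svec x) g = 0 by rewrite /dot dformZr -/(dot _ _) xh mulr0.
exists (sphere_arc g1 xg th).
  by rewrite -{1}(sphere_arc0 g1 xg) sphere_arc_dist sub0r normrN gtr0_norm //; lra.
exists (sin th / Num.sqrt (Q h)).
  by rewrite divr_gt0 ?sqrtr_gt0 ?dotxx_gt0 // sin_gt0_pi // th0 /=; lra.
move=> c cx; rewrite svec_arc /dot dformBr -/(dot _ _) great_arc_dotr cx.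
by rewrite /g /dot dformZr -/(dot c h) -/(dot c (svec x)) cx; ring.
Qed.

Lemma sphere_equidistant_noncollinear x o a b : o <> a -> o <> b -> a <> b ->
  d x o = d x a -> d x o = d x b -> forall k, svec o - svec a != k *: (svec o - svec b).
Proof.
move=> oa ob ab _ _ k.
have svec_neq p q : p <> q -> svec p != svec q by move=> pq; apply/eqP => /svec_inj.
apply: (quadric_noncollinear (w := fun=> 1) (K := 1));
  try exact: svec_unit; try exact: svec_neq.
exact: unit_dot_eq1 (svec_unit o) (svec_unit b).
Qed.

Lemma sphere_mconnected_mediatrix_minus a b : a <> b ->
  mconnected d (mediatrix_minus d a b).
Proof.
move=> ab; set F := dot (svec a - svec b).
have minusE y : mediatrix_minus d a b y <-> 0 < F (svec y).
  by rewrite /mediatrix_minus /= subr_lt0 sphere_dist_ltE.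
have Fa : 0 < F (svec a).
  apply/minusE; rewrite /mediatrix_minus /= sphere_dist0 subr_lt0.
  exact/sphere_dist_gt0/nesym.
apply: (mconnected_star (c := a)); first exact/minusE.
move=> y My; have /minusE Fy := My; have [ya|ya] := pselect (y = a).
  exists (fun=> y); split => //.
  by move=> t e _ e0; exists 1 => // s _ _; rewrite sphere_dist0.
have ya_bounds : -1 < dot (svec y) (svec a) < 1.
  rewrite sphere_dot_lt1 // andbT lt_neqAle eq_sym.
  have /andP [-> _] := sphere_dot_bounds y a; rewrite andbT.
  apply/eqP => /sphere_dot_eqN1 ay; move: Fy; rewrite -[svec y]opprK -ay.
  by rewrite /F /dot dformNr -/(dot _ _) oppr_gt0 ltNge ltW.
have [g [g1 yg arc_a]] := great_arc_through (svec_unit y) (svec_unit a) ya_bounds.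
set th := acos _ in arc_a.
have th0 : 0 < th by case/andP: ya_bounds => /ltW N1 lt1; rewrite acos_gt0 // N1.
have thpi : th < pi by case/andP: ya_bounds => N1 /ltW le1; rewrite acos_ltpi // N1.
exists (fun t => sphere_arc g1 yg (t * th)); split.
- by rewrite mul0r sphere_arc0.
- by apply: svec_inj; rewrite mul1r svec_arc.
- move=> t /andP [t0 t1]; apply/minusE; rewrite svec_arc.
  have sth : 0 < sin th by apply: sin_gt0_pi; rewrite th0.
  have interp := great_arc_interpolate (svec a - svec b) (svec y) g th (t * th).
  rewrite arc_a -/F in interp; rewrite -(pmulr_rgt0 _ sth) interp.
  have s2 : 0 <= sin (t * th) by apply: sin_ge0_pi; apply/andP; split; nra.
  have [t_lt1|t_ge1] := ltrP t 1.
    have : 0 < sin (th - t * th) by apply: sin_gt0_pi; apply/andP; split; nra.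
    by nra.
  have -> : t = 1 by lra.
  by rewrite mul1r subrr sin0 mul0r add0r mulr_gt0.
- by apply: sphere_arc_continuous; rewrite !ltW.
Qed.

Lemma sphere_arc_to x a : (0 < n)%N -> x <> a ->
  exists g, [/\ Q g = 1, dot (svec x) g = 0 & great_arc (svec x) g (d x a) = svec a].
Proof.
move=> n0 xa; have [xa_lt|xa_pi] := ltrP (d x a) pi.
  rewrite sphere_distE; apply: great_arc_through; rewrite ?svec_unit // sphere_dot_lt1 // andbT.
  rewrite lt_neqAle eq_sym; have /andP [-> _] := sphere_dot_bounds x a; rewrite andbT.
  by apply: contraTneq xa_lt => xaN1; rewrite sphere_distE xaN1 acosN1 ltxx.
have {xa_pi} xa_pi : d x a = pi by apply/eqP; rewrite eq_le sphere_dist_lepi.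
(* a is antipodal to x: any unit tangent vector works, and one exists as n > 0. *)
have [g [g1 xg]] := exists_unit_perp (svec x) (n0 : (1 < n.+1)%N).
exists g; split => //; rewrite xa_pi /great_arc cospi sinpi scale0r addr0 scaleN1r.
by apply/esym/sphere_dot_eqN1; rewrite -cos_sphere_dist xa_pi cospi.
Qed.

Lemma sphere_metrically_consistent : (0 < n)%N -> metrically_consistent d.
Proof.
move=> n0 x s r r0 rs a; rewrite /msphere /= => xa.
have xa' : x <> a by move=> ax; rewrite -ax sphere_dist0 in xa; lra.
have [g [g1 xg arc_a]] := sphere_arc_to n0 xa'; rewrite xa in arc_a.
have spi : s <= pi by rewrite -xa sphere_dist_lepi.
have arc_dist u v : 0 <= u <= pi -> 0 <= v <= pi ->
    d (sphere_arc g1 xg u) (sphere_arc g1 xg v) = `|u - v|.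
  move=> /andP [u0 upi] /andP [v0 vpi]; rewrite sphere_arc_dist // ler_norml.
  by apply/andP; split; lra.
have r_in : 0 <= r <= pi by apply/andP; split; lra.
have s_in : 0 <= s <= pi by apply/andP; split; lra.
set z := sphere_arc g1 xg r.
have xz : d x z = r.
  rewrite -{1}(sphere_arc0 g1 xg) arc_dist ?sub0r ?normrN ?gtr0_norm //.
  by rewrite lexx (ltW (pi_gt0 R)).
have a_arc : a = sphere_arc g1 xg s by apply: svec_inj.
have za : d z a = s - r by rewrite a_arc arc_dist // distrC gtr0_norm // subr_gt0.
exists z; split; first by rewrite /msphere /= xz.
split.
  move=> y; rewrite /mball /= za => zy.
  by have := sphere_dist_triangle x z y; rewrite xz; lra.
apply/seteqP; split => [y [/= zy xy]|y -> //]; rewrite /msphere za in zy xy.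
have c1 : dot (svec z) (svec y) = cos (s - r) by rewrite -cos_sphere_dist zy.
have c2 : dot (svec x) (svec y) = cos s by rewrite -cos_sphere_dist xy.
rewrite svec_arc dotC great_arc_dotr !(dotC (svec y)) c2 cosB in c1.
have sr : 0 < sin r by apply: sin_gt0_pi; apply/andP; split; lra.
have gy : dot g (svec y) = sin s.
  apply: (mulfI (lt0r_neq0 sr)); apply: (addrI (cos r * cos s)).
  by rewrite c1; ring.
apply/esym/svec_inj/(unit_dot_eq1 (svec_unit a) (svec_unit y)).
by rewrite dotC -arc_a great_arc_dotr !(dotC (svec y)) c2 gy -!expr2 addrC sin2cos2; ring.
Qed.

Theorem sphere_Brillouin : (0 < n)%N -> Brillouin d.
Proof.
move=> n0; have ltE := sphere_dist_ltE; have levelC : forall a b : X, 0 = - 0 :> R by rewrite oppr0.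
apply: (Brillouin_of_model (emb := svec) (nrml := svec) (w := fun=> 1)
  (level := fun _ _ => 0)).
- exact: sphere_distC.
- exact: sphere_dist_triangle.
- exact: sphere_dist0.
- exact: sphere_dist_gt0.
- exact: svec_inj.
- exact: ltE.
- exact: levelC.
- by move=> a b x /(mediatrix_level sphere_distC ltE levelC).
- by move=> x h _; apply: dotxx_gt0.
- exact: sphere_tangent_step.
- exact: sphere_equidistant_noncollinear.
- exact: sphere_metrically_consistent.
- exact: sphere_mconnected_mediatrix_minus.
Qed.

End Sphere.

Section HyperbolicFunctions.
Variable R : realType.
Implicit Types s t u v : R.

Definition cosh t : R := (expR t + expR (- t)) / 2.
Definition sinh t : R := (expR t - expR (- t)) / 2.

Let expR_neq0 t : expR t != 0 :> R. Proof. by rewrite gt_eqF ?expR_gt0. Qed.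

Lemma cosh_sinh_sqr t : cosh t ^+ 2 - sinh t ^+ 2 = 1.
Proof. by rewrite /cosh /sinh expRN; field. Qed.

Lemma coshD s t : cosh (s + t) = cosh s * cosh t + sinh s * sinh t.
Proof. by rewrite /cosh /sinh !expRN !expRD; field; rewrite ?mulf_neq0 ?expR_neq0. Qed.

Lemma coshB s t : cosh (s - t) = cosh s * cosh t - sinh s * sinh t.
Proof. by rewrite /cosh /sinh !expRN !expRD !expRN; field; rewrite ?mulf_neq0 ?expR_neq0. Qed.

Lemma sinhB s t : sinh (s - t) = sinh s * cosh t - cosh s * sinh t.
Proof. by rewrite /cosh /sinh !expRN !expRD !expRN; field; rewrite ?mulf_neq0 ?expR_neq0. Qed.

Lemma coshN t : cosh (- t) = cosh t.
Proof. by rewrite /cosh opprK addrC. Qed.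

Lemma cosh0 : cosh 0 = 1.
Proof. by rewrite /cosh oppr0 expR0; field. Qed.

Lemma sinh0 : sinh 0 = 0.
Proof. by rewrite /sinh oppr0 subrr mul0r. Qed.

Lemma sinh_gt0 t : 0 < t -> 0 < sinh t.
Proof. by move=> t0; rewrite /sinh divr_gt0 // subr_gt0 ltr_expR; lra. Qed.

Lemma sinh_ge0 t : 0 <= t -> 0 <= sinh t.
Proof. by rewrite le_eqVlt => /predU1P [<-|/sinh_gt0/ltW //]; rewrite sinh0. Qed.

Lemma cosh_ge1 t : 1 <= cosh t.
Proof.
have -> : cosh t = 1 + (expR t - 1) ^+ 2 / (2 * expR t) by rewrite /cosh expRN; field.
by rewrite lerDl divr_ge0 ?sqr_ge0 // mulr_ge0 ?expR_ge0.
Qed.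

Lemma cosh_ltE u v : 0 <= u -> 0 <= v -> (cosh u < cosh v) = (u < v).
Proof.
move=> u0 v0.
have diff : cosh v - cosh u = (expR v - expR u) * (1 - (expR (u + v))^-1) / 2.
  by rewrite /cosh !expRN expRD; field; rewrite ?mulf_neq0 ?expR_neq0.
have [uv0|uv_gt0] := lerP (u + v) 0.
  have [-> ->] : u = 0 /\ v = 0 by split; lra.
  by rewrite !ltxx.
have pos : 0 < 1 - (expR (u + v))^-1 by rewrite subr_gt0 invf_lt1 ?expR_gt0 // expR_gt1.
rewrite -subr_gt0 diff mulrC pmulr_rgt0 ?invr_gt0 // mulrC pmulr_rgt0 //.
by rewrite subr_gt0 ltr_expR.
Qed.

Lemma sinh_sqrt t : 0 <= t -> sinh t = Num.sqrt (cosh t ^+ 2 - 1).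
Proof.
move=> t0; rewrite -(cosh_sinh_sqr t) opprB addrC subrK sqrtr_sqr ger0_norm //.
exact: sinh_ge0.
Qed.

Lemma arcosh_cosh t : 0 <= t -> arcosh (cosh t) = t.
Proof.
move=> t0; rewrite /arcosh -sinh_sqrt //.
have -> : cosh t + sinh t = expR t by rewrite /cosh /sinh; field.
by rewrite expRK.
Qed.

Lemma cosh_arcosh s : 1 <= s -> cosh (arcosh s) = s.
Proof.
move=> s1; rewrite /arcosh; set q := Num.sqrt (s ^+ 2 - 1).
have q2 : q ^+ 2 = s ^+ 2 - 1 by rewrite sqr_sqrtr //; nra.
have q0 : 0 <= q := sqrtr_ge0 _.
have sq0 : 0 < s + q by lra.
rewrite /cosh expRN lnK ?posrE //.
have -> : (s + q)^-1 = s - q.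
  by apply: (mulfI (lt0r_neq0 sq0)); rewrite mulfV ?lt0r_neq0 //; nra.
by field.
Qed.

Lemma arcosh_ge0 s : 1 <= s -> 0 <= arcosh s.
Proof. by move=> s1; apply: ln_ge0; rewrite -[1]addr0 lerD ?sqrtr_ge0. Qed.

Lemma arcosh_ltE s t : 1 <= s -> 1 <= t -> (arcosh s < arcosh t) = (s < t).
Proof. by move=> s1 t1; rewrite -cosh_ltE ?arcosh_ge0 // !cosh_arcosh. Qed.

Lemma arcosh_leE s t : 1 <= s -> 1 <= t -> (arcosh s <= arcosh t) = (s <= t).
Proof. by move=> s1 t1; rewrite !leNgt arcosh_ltE. Qed.

Lemma arcosh_cosh_abs u : arcosh (cosh u) = `|u|.
Proof.
have [u0|u0] := lerP 0 u; first by rewrite ger0_norm // arcosh_cosh.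
by rewrite ltr0_norm // -coshN arcosh_cosh // oppr_ge0 ltW.
Qed.

End HyperbolicFunctions.

Section Lorentz.
Variables (R : realType) (n : nat).
Local Notation V := 'rV[R]_n.+1.

Definition lorentz_weight : 'I_n.+1 -> R := fun i => if i == ord0 then -1 else 1.
Definition space_weight : 'I_n.+1 -> R := fun i => if i == ord0 then 0 else 1.
Local Notation L := (dform lorentz_weight).
Local Notation S := (dform space_weight).
Implicit Types x y z g h u v c : V.

Lemma lorentzE u v : lorentz u v = L u v.
Proof.
rewrite /lorentz /dform [in RHS](bigD1 ord0) //= /lorentz_weight eqxx mulN1r.
by congr (_ + _); apply: eq_bigr => i /negbTE ->; rewrite mul1r.
Qed.

Lemma lorentz_split u v : L u v = - (u ord0 ord0 * v ord0 ord0) + S u v.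
Proof.
rewrite /dform (bigD1 ord0) //= [in RHS](bigD1 ord0) //=.
rewrite /lorentz_weight /space_weight eqxx mulN1r mul0r add0r.
by congr (_ + _); apply: eq_bigr => i /negbTE ->.
Qed.

Lemma space_ge0 v : 0 <= S v v.
Proof.
by apply: sumr_ge0 => i _; rewrite /space_weight; case: eqP; rewrite ?mul0r // mul1r -expr2 sqr_ge0.
Qed.

Lemma space_sqr_le u v : S u v ^+ 2 <= S u u * S v v.
Proof.
apply: sqr_le_of_quadratic_ge0 (space_ge0 v) _ => t.
by have := space_ge0 (u + t *: v); rewrite !dformE (dformC _ v u); lra.
Qed.

Lemma space_eq0 v : S v v = 0 -> v ord0 ord0 = 0 -> v = 0.
Proof.
move=> /eqP; rewrite psumr_eq0 => [/allP v0 v00|i _]; last first.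
  by rewrite /space_weight; case: eqP; rewrite ?mul0r // mul1r -expr2 sqr_ge0.
apply/rowP => i; rewrite mxE; have [->|i0] := eqVneq i ord0; first exact: v00.
have := v0 i (mem_index_enum i); rewrite /space_weight (negbTE i0) mul1r -expr2.
by rewrite sqrf_eq0 => /eqP.
Qed.

Lemma lorentz_timelike_perp z v : L z z < 0 -> L z v = 0 ->
  0 <= L v v /\ (L v v = 0 -> v = 0).
Proof.
move=> zz zv; rewrite !lorentz_split in zz zv *.
set z0 := z ord0 ord0 in zz zv *; set v0 := v ord0 ord0 in zv *.
have Sz := space_ge0 z; have Sv := space_ge0 v.
have zv' : S z v = z0 * v0 by lra.
have cs : (z0 * v0) ^+ 2 <= S z z * S v v by rewrite -zv' space_sqr_le.
have zz' : S z z < z0 ^+ 2 by rewrite expr2; lra.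
have v0_le : v0 ^+ 2 <= S v v.
  rewrite leNgt; apply/negP => Sv_lt.
  have : S z z * S v v <= S z z * v0 ^+ 2 by rewrite ler_wpM2l // ltW.
  have : S z z * v0 ^+ 2 < z0 ^+ 2 * v0 ^+ 2 by rewrite ltr_pM2r //; lra.
  by rewrite exprMn in cs; lra.
split => [|vv0]; first by rewrite -expr2; lra.
have Svv : S v v = v0 ^+ 2 by rewrite -expr2 in vv0; lra.
have v00 : v0 = 0.
  apply/eqP; rewrite -sqrf_eq0; apply/eqP/le_anti; rewrite sqr_ge0 andbT.
  have : (z0 ^+ 2 - S z z) * v0 ^+ 2 <= 0 by rewrite exprMn Svv in cs; lra.
  by rewrite pmulr_rle0 // subr_gt0.
by apply: space_eq0 => //; rewrite Svv v00 expr0n.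
Qed.

Lemma lorentz_timelike_perp_gt0 z v : L z z < 0 -> L z v = 0 -> v != 0 -> 0 < L v v.
Proof.
move=> zz zv v0; have [ge0 eq0] := lorentz_timelike_perp zz zv.
by rewrite lt_neqAle ge0 andbT eq_sym; apply: contraNneq v0 => /eq0 ->.
Qed.

Lemma lorentz_timelike_perp_sqr_le z p q : L z z < 0 -> L z p = 0 -> L z q = 0 ->
  L p q ^+ 2 <= L p p * L q q.
Proof.
move=> zz zp zq; apply: sqr_le_of_quadratic_ge0 (lorentz_timelike_perp zz zq).1 _ => t.
have zpq : L z (p + t *: q) = 0 by rewrite !dformE zp zq; ring.
by have := (lorentz_timelike_perp zz zpq).1; rewrite !dformE (dformC _ q p); lra.
Qed.

Definition hyperboloid v := L v v = -1 /\ 0 < v ord0 ord0.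

Lemma hyperboloid_lorentz_lt0 x y : hyperboloid x -> hyperboloid y -> L x y < 0.
Proof.
move=> [xx x0] [yy y0]; move: xx yy; rewrite !lorentz_split => xx yy.
set a := x ord0 ord0 in x0 xx *; set b := y ord0 ord0 in y0 yy *.
have Sx : S x x = a ^+ 2 - 1 by rewrite expr2; lra.
have Sy : S y y = b ^+ 2 - 1 by rewrite expr2; lra.
have cs := space_sqr_le x y; rewrite Sx Sy in cs.
have ab : 0 < a * b by apply: mulr_gt0.
have [//|Sxy_ge] := ltrP (S x y) (a * b); first lra.
have : (a * b) ^+ 2 <= S x y ^+ 2 by rewrite ler_sqr // ?nnegrE ltW //; lra.
have := space_ge0 x; have := space_ge0 y; rewrite Sx Sy exprMn; nra.
Qed.

Lemma hyperboloid_lorentz_le x y : hyperboloid x -> hyperboloid y ->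
  L x y <= -1 /\ (L x y = -1 -> x = y).
Proof.
move=> hx hy; have xy_lt0 := hyperboloid_lorentz_lt0 hx hy.
have [xx _] := hx; have [yy _] := hy.
set p := y + L x y *: x.
have xp : L x p = 0 by rewrite /p !dformE xx; ring.
have pp : L p p = L x y ^+ 2 - 1 by rewrite /p !dformE xx yy (dformC _ y x); ring.
have xx_lt0 : L x x < 0 by rewrite xx ltrN10.
have [pp_ge0 pp_eq0] := lorentz_timelike_perp xx_lt0 xp.
rewrite pp in pp_ge0 pp_eq0; split; first nra.
move=> xyN1; have /pp_eq0 : L x y ^+ 2 - 1 = 0 by rewrite xyN1; ring.
by rewrite /p xyN1 scaleN1r => /subr0_eq.
Qed.

Lemma hyperboloid_of_future x y : hyperboloid x -> L y y = -1 -> L x y < 0 ->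
  hyperboloid y.
Proof.
move=> hx yy xy; split => //; have [y0|//] := lerP (y ord0 ord0) 0.
have Ny : hyperboloid (- y).
  split; first by rewrite dformNl dformNr opprK.
  rewrite mxE oppr_gt0 lt_neqAle y0 andbT; apply/eqP => y00.
  by move: yy; rewrite lorentz_split y00 mul0r oppr0 add0r; have := space_ge0 y; lra.
by have := hyperboloid_lorentz_lt0 hx Ny; rewrite dformNr; lra.
Qed.

Lemma hyperboloid_triangle x y z : hyperboloid x -> hyperboloid y -> hyperboloid z ->
  - L x z <= (- L x y) * (- L y z) +
    Num.sqrt ((- L x y) ^+ 2 - 1) * Num.sqrt ((- L y z) ^+ 2 - 1).
Proof.
move=> [xx _] [yy _] [zz _].
set p := x + L x y *: y; set q := z + L y z *: y.
have yy_lt0 : L y y < 0 by rewrite yy ltrN10.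
have yp : L y p = 0 by rewrite /p !dformE yy (dformC _ y x); ring.
have yq : L y q = 0 by rewrite /q !dformE yy; ring.
have pp : L p p = L x y ^+ 2 - 1 by rewrite /p !dformE xx yy (dformC _ y x); ring.
have qq : L q q = L y z ^+ 2 - 1 by rewrite /q !dformE yy zz (dformC _ z y); ring.
have pq : L p q = L x z + L x y * L y z by rewrite /p /q !dformE yy; ring.
have cs := lorentz_timelike_perp_sqr_le yy_lt0 yp yq; rewrite pp qq pq in cs.
have pp0 := (lorentz_timelike_perp yy_lt0 yp).1; rewrite pp in pp0.
have qq0 := (lorentz_timelike_perp yy_lt0 yq).1; rewrite qq in qq0.
rewrite !sqrrN -sqrtrM // -[X in _ <= _ + X]ger0_norm ?sqrtr_ge0 //.
have : `|L x z + L x y * L y z| <= Num.sqrt ((L x y ^+ 2 - 1) * (L y z ^+ 2 - 1)).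
  by rewrite -sqrtr_sqr ler_sqrt ?mulr_ge0.
by rewrite ger0_norm ?sqrtr_ge0 // => /ler_normlP [h _]; lra.
Qed.

Definition hyp_arc x g (t : R) : V := cosh t *: x + sinh t *: g.

Lemma hyp_arc_dotr c x g t : L c (hyp_arc x g t) = cosh t * L c x + sinh t * L c g.
Proof. by rewrite /hyp_arc !dformE. Qed.

Lemma hyp_arc_dot x g s t : L x x = -1 -> L g g = 1 -> L x g = 0 ->
  L (hyp_arc x g s) (hyp_arc x g t) = - cosh (s - t).
Proof.
move=> xx gg xg; rewrite /hyp_arc !dformE xx gg xg (dformC _ g x) xg coshB; ring.
Qed.

Lemma hyp_arc0 x g : hyp_arc x g 0 = x.
Proof. by rewrite /hyp_arc cosh0 sinh0 scale1r scale0r addr0. Qed.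

Lemma hyp_arc_hyperboloid x g t : hyperboloid x -> L g g = 1 -> L x g = 0 ->
  hyperboloid (hyp_arc x g t).
Proof.
move=> hx gg xg; apply: (hyperboloid_of_future hx).
  by rewrite hyp_arc_dot ?hx.1 // subrr cosh0.
by rewrite hyp_arc_dotr hx.1 xg; have := cosh_ge1 t; lra.
Qed.

Lemma hyp_arc_interpolate c x g th s :
  sinh th * L c (hyp_arc x g s) =
  sinh (th - s) * L c x + sinh s * L c (hyp_arc x g th).
Proof. by rewrite !hyp_arc_dotr sinhB; ring. Qed.

Lemma hyp_arc_through x a : hyperboloid x -> hyperboloid a -> x <> a ->
  exists g, [/\ L g g = 1, L x g = 0 & hyp_arc x g (arcosh (- L x a)) = a].
Proof.
move=> hx ha xa; set th := arcosh (- L x a).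
have [le1 eq1] := hyperboloid_lorentz_le hx ha.
have gt1 : 1 < - L x a.
  by rewrite ltrNr lt_neqAle le1 andbT; apply/eqP => /eq1.
have cth : cosh th = - L x a by rewrite /th cosh_arcosh // ltW.
have th0 : 0 < th by rewrite -(cosh_ltE (lexx 0)) ?cosh0 ?cth // arcosh_ge0 // ltW.
have sth : 0 < sinh th := sinh_gt0 th0.
have s2 : sinh th ^+ 2 = L x a ^+ 2 - 1 by have := cosh_sinh_sqr th; rewrite cth sqrrN; lra.
have s0 : sinh th != 0 by rewrite gt_eqF.
exists ((sinh th)^-1 *: (a - cosh th *: x)); split.
- rewrite !dformE hx.1 ha.1 cth (dformC _ a x).
  have key A B : A + B = sinh th ^+ 2 ->
      (sinh th)^-1 * ((sinh th)^-1 * A + (sinh th)^-1 * B) = 1.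
    by move=> AB; rewrite -mulrDr AB; field.
  by apply: key; rewrite s2; ring.
- by rewrite !dformE hx.1 cth; field.
- by apply/rowP => i; rewrite /hyp_arc !mxE; field.
Qed.

End Lorentz.

Section Hyperbolic.
Variables (R : realType) (n : nat).
Local Notation X := (hyp_pt R n).
Local Notation V := 'rV[R]_n.+1.
Local Notation d := (@hyp_dist R n).
Local Notation L := (dform (@lorentz_weight R n)).
Implicit Types x y z a b o : X.

Definition hvec (x : X) : V := proj1_sig x.

Lemma hvec_hyperboloid x : hyperboloid (hvec x).
Proof. by case: x => v [vv v0]; split; rewrite // -lorentzE. Qed.

Lemma hvec_inj : injective hvec.
Proof. by move=> [x hx] [y hy] /= xy; subst y; congr exist; apply: Prop_irrelevance. Qed.

Lemma hyperboloid_pt (v : V) : hyperboloid v -> lorentz v v = -1 /\ 0 < v ord0 ord0.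
Proof. by rewrite lorentzE. Qed.

Definition to_hyp (v : V) (hv : hyperboloid v) : X := exist _ v (hyperboloid_pt hv).

Lemma hyp_distE x y : d x y = arcosh (- L (hvec x) (hvec y)).
Proof. by rewrite /hyp_dist lorentzE. Qed.

Lemma hyp_lorentz_ge1 x y : 1 <= - L (hvec x) (hvec y).
Proof. by rewrite lerNr; have [] := hyperboloid_lorentz_le (hvec_hyperboloid x) (hvec_hyperboloid y). Qed.

Lemma cosh_hyp_dist x y : cosh (d x y) = - L (hvec x) (hvec y).
Proof. by rewrite hyp_distE cosh_arcosh // hyp_lorentz_ge1. Qed.

Lemma hyp_dist_ge0 x y : 0 <= d x y.
Proof. by rewrite hyp_distE arcosh_ge0 // hyp_lorentz_ge1. Qed.

Lemma hyp_distC x y : d x y = d y x.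
Proof. by rewrite !hyp_distE dformC. Qed.

Lemma hyp_dist0 x : d x x = 0.
Proof. by rewrite hyp_distE (hvec_hyperboloid x).1 opprK -cosh0 arcosh_cosh. Qed.

Lemma hyp_dist_gt0 x y : x <> y -> 0 < d x y.
Proof.
move=> xy; have [le eq] := hyperboloid_lorentz_le (hvec_hyperboloid x) (hvec_hyperboloid y).
have gt1 : 1 < - L (hvec x) (hvec y).
  by rewrite ltrNr lt_neqAle le andbT; apply/eqP => /eq /hvec_inj.
by rewrite -(arcosh_cosh (lexx 0)) cosh0 hyp_distE arcosh_ltE // ltW.
Qed.

Lemma hyp_dist_triangle x y z : d x z <= d x y + d y z.
Proof.
have sum0 := addr_ge0 (hyp_dist_ge0 x y) (hyp_dist_ge0 y z).
rewrite -(arcosh_cosh sum0) hyp_distE arcosh_leE ?hyp_lorentz_ge1 ?cosh_ge1 //.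
rewrite coshD !cosh_hyp_dist !sinh_sqrt ?hyp_dist_ge0 // !cosh_hyp_dist.
exact: hyperboloid_triangle (hvec_hyperboloid x) (hvec_hyperboloid y) (hvec_hyperboloid z).
Qed.

Lemma hyp_dist_ltE a b y : (d a y < d b y) <-> 0 < L (hvec a - hvec b) (hvec y).
Proof. by rewrite !hyp_distE arcosh_ltE ?hyp_lorentz_ge1 // ltrN2 dformBl subr_gt0. Qed.

Section Arc.
Variables (x : X) (g : V).
Hypotheses (gg : L g g = 1) (xg : L (hvec x) g = 0).

Definition hyp_pt_arc t : X := to_hyp (hyp_arc_hyperboloid t (hvec_hyperboloid x) gg xg).

Lemma hvec_arc t : hvec (hyp_pt_arc t) = hyp_arc (hvec x) g t.
Proof. by []. Qed.

Lemma hyp_pt_arc0 : hyp_pt_arc 0 = x.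
Proof. by apply: hvec_inj; rewrite hvec_arc hyp_arc0. Qed.

Lemma hyp_pt_arc_dist s t : d (hyp_pt_arc s) (hyp_pt_arc t) = `|s - t|.
Proof.
by rewrite hyp_distE !hvec_arc hyp_arc_dot ?(hvec_hyperboloid x).1 // opprK arcosh_cosh_abs.
Qed.

Lemma hyp_pt_arc_continuous th : 0 <= th -> path_continuous d (fun t => hyp_pt_arc (t * th)).
Proof.
move=> th0 t e _ e0; have [del del0 small] := small_scale th0 e0.
exists del => // s _ st /=.
by rewrite hyp_pt_arc_dist -mulrBl normrM (ger0_norm th0) distrC small.
Qed.

End Arc.

Lemma hyp_tangent_gt0 x h : L (hvec x) h = 0 -> h != 0 -> 0 < L h h.
Proof.
by apply: lorentz_timelike_perp_gt0; rewrite (hvec_hyperboloid x).1 ltrN10.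
Qed.

Lemma hyp_tangent_step x h e : L (hvec x) h = 0 -> h != 0 -> 0 < e ->
  exists2 y, d x y < e & exists2 k, 0 < k &
    forall c, L c (hvec x) = 0 -> L c (hvec y - hvec x) = k * L c h.
Proof.
move=> xh h0 e0; have hh := hyp_tangent_gt0 xh h0.
set g := (Num.sqrt (L h h))^-1 *: h.
have gg : L g g = 1 by apply: dform_normalize.
have xg : L (hvec x) g = 0 by rewrite dformZr xh mulr0.
exists (hyp_pt_arc gg xg (e / 2)).
  by rewrite -{1}(hyp_pt_arc0 gg xg) hyp_pt_arc_dist sub0r normrN gtr0_norm; lra.
exists (sinh (e / 2) / Num.sqrt (L h h)); first by rewrite divr_gt0 ?sqrtr_gt0 ?sinh_gt0 //; lra.
by move=> c cx; rewrite hvec_arc dformBr hyp_arc_dotr cx /g dformZr; ring.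
Qed.

Lemma hyp_equidistant_noncollinear x o a b : o <> a -> o <> b -> a <> b ->
  d x o = d x a -> d x o = d x b -> forall k, hvec o - hvec a != k *: (hvec o - hvec b).
Proof.
move=> oa ob ab _ _ k.
have hvec_neq p q : p <> q -> hvec p != hvec q by move=> pq; apply/eqP => /hvec_inj.
apply: (quadric_noncollinear (K := -1)); try exact: (hvec_hyperboloid _).1.
- exact: (hyperboloid_lorentz_le (hvec_hyperboloid o) (hvec_hyperboloid b)).2.
- exact: hvec_neq.
- exact: hvec_neq.
- exact: hvec_neq.
Qed.

Lemma hyp_mconnected_mediatrix_minus a b : a <> b ->
  mconnected d (mediatrix_minus d a b).
Proof.
move=> ab; set F := L (hvec a - hvec b).
have minusE y : mediatrix_minus d a b y <-> 0 < F (hvec y).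
  by rewrite /mediatrix_minus /= subr_lt0 hyp_dist_ltE.
have Fa : 0 < F (hvec a).
  apply/minusE; rewrite /mediatrix_minus /= hyp_dist0 subr_lt0.
  exact/hyp_dist_gt0/nesym.
apply: (mconnected_star (c := a)); first exact/minusE.
move=> y My; have /minusE Fy := My; have [ya|ya] := pselect (y = a).
  exists (fun=> y); split => //.
  by move=> t e _ e0; exists 1 => // s _ _; rewrite hyp_dist0.
have [g [gg yg arc_a]] := hyp_arc_through (hvec_hyperboloid y) (hvec_hyperboloid a)
  (fun E => ya (hvec_inj E)).
rewrite -hyp_distE in arc_a; set th := d y a in arc_a.
have th0 : 0 < th := hyp_dist_gt0 ya.
exists (fun t => hyp_pt_arc gg yg (t * th)); split.
- by rewrite mul0r hyp_pt_arc0.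
- by apply: hvec_inj; rewrite mul1r hvec_arc.
- move=> t /andP [t0 t1]; apply/minusE; rewrite hvec_arc.
  have interp := hyp_arc_interpolate (hvec a - hvec b) (hvec y) g th (t * th).
  rewrite arc_a -/F in interp; rewrite -(pmulr_rgt0 _ (sinh_gt0 th0)) interp.
  have s2 : 0 <= sinh (t * th) by apply: sinh_ge0; nra.
  have [t_lt1|t_ge1] := ltrP t 1.
    have : 0 < sinh (th - t * th) by apply: sinh_gt0; nra.
    by nra.
  have -> : t = 1 by lra.
  by rewrite mul1r subrr sinh0 mul0r add0r mulr_gt0 // sinh_gt0.
- exact/hyp_pt_arc_continuous/ltW.
Qed.

Lemma hyp_metrically_consistent : metrically_consistent d.
Proof.
move=> x s r r0 rs a; rewrite /msphere /= => xa.
have xa' : x <> a by move=> ax; rewrite -ax hyp_dist0 in xa; lra.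
have [g [gg xg arc_a]] := hyp_arc_through (hvec_hyperboloid x) (hvec_hyperboloid a)
  (fun E => xa' (hvec_inj E)).
rewrite -hyp_distE xa in arc_a.
set z := hyp_pt_arc gg xg r.
have xz : d x z = r.
  by rewrite -{1}(hyp_pt_arc0 gg xg) hyp_pt_arc_dist sub0r normrN gtr0_norm.
have a_arc : a = hyp_pt_arc gg xg s by apply: hvec_inj.
have za : d z a = s - r by rewrite a_arc hyp_pt_arc_dist distrC gtr0_norm // subr_gt0.
exists z; split; first by rewrite /msphere /= xz.
split.
  move=> y; rewrite /mball /= za => zy.
  by have := hyp_dist_triangle x z y; rewrite xz; lra.
apply/seteqP; split => [y [/= zy xy]|y -> //]; rewrite /msphere za in zy xy.
have c1 : L (hvec y) (hvec z) = - cosh (s - r) by rewrite -zy cosh_hyp_dist opprK dformC.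
have c2 : L (hvec y) (hvec x) = - cosh s by rewrite -xy cosh_hyp_dist opprK dformC.
rewrite hvec_arc hyp_arc_dotr c2 coshB in c1.
have sr : 0 < sinh r := sinh_gt0 r0.
have gy : L (hvec y) g = sinh s.
  apply: (mulfI (lt0r_neq0 sr)); apply: (addrI (- (cosh r * cosh s))).
  by rewrite -mulrN c1; ring.
apply/hvec_inj/(hyperboloid_lorentz_le (hvec_hyperboloid y) (hvec_hyperboloid a)).2.
rewrite -arc_a hyp_arc_dotr c2 gy; have := cosh_sinh_sqr s; rewrite !expr2; lra.
Qed.

Theorem hyp_Brillouin : Brillouin d.
Proof.
have ltE := hyp_dist_ltE; have levelC : forall a b : X, 0 = - 0 :> R by rewrite oppr0.
apply: (Brillouin_of_model (emb := hvec) (nrml := hvec) (w := @lorentz_weight R n)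
  (level := fun _ _ => 0)).
- exact: hyp_distC.
- exact: hyp_dist_triangle.
- exact: hyp_dist0.
- exact: hyp_dist_gt0.
- exact: hvec_inj.
- exact: ltE.
- exact: levelC.
- by move=> a b x /(mediatrix_level hyp_distC ltE levelC).
- exact: hyp_tangent_gt0.
- exact: hyp_tangent_step.
- exact: hyp_equidistant_noncollinear.
- exact: hyp_metrically_consistent.
- exact: hyp_mconnected_mediatrix_minus.
Qed.

End Hyperbolic.

Theorem mainTheorem8 (R : realType) (n : nat) :
  Brillouin (@euclid_dist R n) /\
  ((0 < n)%N -> Brillouin (@sphere_dist R n)) /\
  Brillouin (@hyp_dist R n).
Proof.
split; first exact: euclid_Brillouin.
split; first exact: sphere_Brillouin.
exact: hyp_Brillouin.
Qed.
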